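(* Let $\mathbf{x}_1,\ldots,\mathbf{x}_n\in\mathbb{S}^{d-1}$ lie strictly on one side of a hyperplane through the origin, i.e., there exists $\mathbf{w}\in\mathbb{R}^d$ with $\langle\mathbf{w},\mathbf{x}_i\rangle>0$ for all $i$. Let $\mathbf{y}\in\arg\min_{\mathbf{v}\in\mathbb{S}^{d-1}}\max_{j\in[n]}\angle(\mathbf{v},\mathbf{x}_j)$ (any minimizer), let $H=\mathbf{y}^\perp$ and let $P_H$ denote orthogonal projection onto $H$. Then $\mathbf{0}\in\mathrm{conv}(P_H(\mathbf{x}_1),\ldots,P_H(\mathbf{x}_n))$.
   Context: $\mathbb{S}^{d-1}$ is the unit sphere in $\mathbb{R}^d$; $\angle(\mathbf{v},\mathbf{x})\in[0,\pi]$ denotes the angle between vectors; $\mathrm{conv}$ is the convex hull. *)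

From HB Require Import structures.
From mathcomp Require Import all_boot all_order all_algebra.
From mathcomp Require Import reals trigo.
Set Implicit Arguments. Unset Strict Implicit. Unset Printing Implicit Defensive.
Import Order.TTheory GRing.Theory Num.Theory.
Local Open Scope ring_scope.

Definition dotv {R : realType} {d : nat} (u v : 'rV[R]_d) : R :=
  \sum_(i < d) u 0 i * v 0 i.
Definition normv {R : realType} {d : nat} (u : 'rV[R]_d) : R :=
  Num.sqrt (dotv u u).

Definition on_sphere {R : realType} {d : nat} (v : 'rV[R]_d) : Prop :=
  normv v = 1.

Definition angle {R : realType} {d : nat} (v x : 'rV[R]_d) : R :=
  acos (dotv v x / (normv v * normv x)).

(* max_{j in [n]} angle(v, x_j)  (angles are >= 0, so 0 is a neutral start) *)
Definition max_angle {R : realType} {d n : nat} (x : 'I_n -> 'rV[R]_d)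
  (v : 'rV[R]_d) : R :=
  \big[Num.max/0]_(j < n) angle v (x j).

Definition proj_perp {R : realType} {d : nat} (y x : 'rV[R]_d) : 'rV[R]_d :=
  x - (dotv x y / dotv y y) *: y.

Definition in_conv {R : realType} {d n : nat} (p : 'I_n -> 'rV[R]_d)
  (z : 'rV[R]_d) : Prop :=
  exists lam : 'I_n -> R,
    (forall i, 0 <= lam i) /\ \sum_(i < n) lam i = 1 /\
    \sum_(i < n) lam i *: p i = z.

From mathcomp Require Import all_boot all_order all_algebra.
From mathcomp Require Import reals trigo.
From mathcomp Require Import ring lra.
Set Implicit Arguments. Unset Strict Implicit. Unset Printing Implicit Defensive.
Import Order.TTheory GRing.Theory Num.Theory.
Local Open Scope ring_scope.

(* If 0 is not in the convex hull of the projections, Gordan's alternative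
   gives a direction u with <u, P_H x_i> > 0 for all i; its projection u0 onto
   H is orthogonal to y and still satisfies <u0, x_i> > 0.  Tilting y towards
   u0, v = (y + t u0) / |y + t u0|, gains order t in every <v, x_i> but loses
   only order t^2 to the normalisation, so for small t > 0 every angle between
   v and an x_i is smaller than the optimal maximal angle M, a contradiction.

   Gordan's alternative (0 is in the convex hull of the p_i, or some u has
   <u, p_i> > 0 for all i) is proved by induction on the number of points:
   given u working for all points but p_0, with <u, p_0> <= 0, apply the
   induction hypothesis to the points where the segments [p_0, p_j] cross the
   hyperplane orthogonal to u. *)

Section Dot.
Context {R : realType} {d : nat}.
Implicit Types u v w : 'rV[R]_d.

Lemma dotvC u v : dotv u v = dotv v u.
Proof. by apply: eq_bigr => i _; rewrite mulrC. Qed.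

Lemma dotvDl u v w : dotv (u + v) w = dotv u w + dotv v w.
Proof. by rewrite /dotv -big_split; apply: eq_bigr => i _; rewrite !mxE mulrDl. Qed.

Lemma dotvZl (a : R) u w : dotv (a *: u) w = a * dotv u w.
Proof. by rewrite /dotv mulr_sumr; apply: eq_bigr => i _; rewrite !mxE mulrA. Qed.

Lemma dotvNl u w : dotv (- u) w = - dotv u w.
Proof. by rewrite -scaleN1r dotvZl mulN1r. Qed.

Lemma dotvBl u v w : dotv (u - v) w = dotv u w - dotv v w.
Proof. by rewrite dotvDl dotvNl. Qed.

Lemma dotvDr u v w : dotv w (u + v) = dotv w u + dotv w v.
Proof. by rewrite dotvC dotvDl !(dotvC w). Qed.

Lemma dotvZr (a : R) u w : dotv w (a *: u) = a * dotv w u.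
Proof. by rewrite dotvC dotvZl dotvC. Qed.

Lemma dotvBr u v w : dotv w (u - v) = dotv w u - dotv w v.
Proof. by rewrite dotvC dotvBl !(dotvC w). Qed.

Lemma dotv0r w : dotv w 0 = 0.
Proof. by rewrite -(scale0r 0) dotvZr mul0r. Qed.

Lemma dotvv_ge0 u : 0 <= dotv u u.
Proof. by apply: sumr_ge0 => i _; rewrite -expr2 sqr_ge0. Qed.

Lemma dotvv_eq0 u : (dotv u u == 0) = (u == 0).
Proof.
apply/eqP/eqP => [|->]; last by rewrite dotv0r.
move/eqP; rewrite psumr_eq0 => [/allP uu0|i _]; last by rewrite -expr2 sqr_ge0.
apply/rowP => i; have := uu0 i (mem_index_enum i).
by rewrite mxE mulf_eq0 orbb => /eqP.
Qed.

Lemma sqr_normv u : normv u ^+ 2 = dotv u u.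
Proof. exact/sqr_sqrtr/dotvv_ge0. Qed.

Lemma on_sphereE u : on_sphere u <-> dotv u u = 1.
Proof.
split => [u1|uu1]; first by rewrite -sqr_normv u1 expr1n.
by rewrite /on_sphere /normv uu1 sqrtr1.
Qed.

Lemma on_sphere_normalize u : u != 0 -> on_sphere ((normv u)^-1 *: u).
Proof.
rewrite -dotvv_eq0 => uu_neq0; apply/on_sphereE.
by rewrite dotvZl dotvZr mulrA -expr2 exprVn sqr_normv mulVf.
Qed.

Lemma dotv_sphere_itv u v : on_sphere u -> on_sphere v -> dotv u v \in `[-1, 1].
Proof.
move=> /on_sphereE uu /on_sphereE vv.
have := dotvv_ge0 (u - v); have := dotvv_ge0 (u + v).
rewrite in_itv /= !dotvBl !dotvBr !dotvDl !dotvDr uu vv (dotvC v u).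
by move=> ? ?; apply/andP; split; lra.
Qed.

Lemma dotv_proj_perpC y u x : dotv u (proj_perp y x) = dotv (proj_perp y u) x.
Proof. by rewrite /proj_perp dotvBr dotvZr dotvBl dotvZl (dotvC y x) (dotvC u y); ring. Qed.

Lemma dotv_proj_perp y u : dotv (proj_perp y u) y = 0.
Proof.
have [/eqP|yy_neq0] := eqVneq (dotv y y) 0.
  by rewrite dotvv_eq0 => /eqP ->; rewrite dotv0r.
by rewrite /proj_perp dotvBl dotvZl divfK // subrr.
Qed.

End Dot.

Lemma exists_pos_mul_lt (R : realFieldType) n (f e : 'I_n -> R) :
  (forall i, 0 < f i) -> exists2 t, 0 < t & forall i, t * e i < f i.
Proof.
move=> f_gt0; set S := \sum_i `|e i| / f i.
have S_ge0 : 0 <= S by apply: sumr_ge0 => i _; rewrite divr_ge0 // ltW.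
have t_gt0 : 0 < (1 + S)^-1 by rewrite invr_gt0; lra.
exists (1 + S)^-1 => // i; set t := (1 + S)^-1 in t_gt0 *.
have fi := f_gt0 i; set r := `|e i| / f i.
have tS : t * S < 1 by rewrite ltr_pdivrMl ?mulr1; lra.
have e_le : e i <= r * f i by rewrite divfK ?gt_eqF ?ler_norm.
have r_le : r <= S by rewrite /r /S (bigD1 i) //= lerDl sumr_ge0 // => j _;
  rewrite divr_ge0 // ltW.
have : t * e i <= t * (r * f i) by rewrite ler_pM2l.
have : t * (r * f i) <= t * S * f i by rewrite mulrA ler_pM2r // ler_pM2l.
have : t * S * f i < f i by rewrite gtr_pMl.
lra.
Qed.

Section Gordan.
Context {R : realType} {d : nat}.

Lemma in_conv0_cone n (p : 'I_n -> 'rV[R]_d) (lam : 'I_n -> R) :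
  (forall i, 0 <= lam i) -> 0 < \sum_i lam i -> \sum_i lam i *: p i = 0 ->
  in_conv p 0.
Proof.
move=> lam_ge0 lam_gt0 comb0; exists (fun i => lam i / \sum_j lam j).
split; first by move=> i; rewrite divr_ge0 // ltW.
split; first by rewrite -mulr_suml divff ?gt_eqF.
under eq_bigr => i _ do rewrite mulrC -scalerA.
by rewrite -scaler_sumr comb0 scaler0.
Qed.

Lemma in_conv0_cons n (p : 'I_n.+1 -> 'rV[R]_d) (c : R) (mu : 'I_n -> R) :
  0 <= c -> (forall j, 0 <= mu j) -> 0 < c + \sum_j mu j ->
  c *: p ord0 + \sum_j mu j *: p (lift ord0 j) = 0 -> in_conv p 0.
Proof.
move=> c_ge0 mu_ge0 sum_gt0 comb0; apply: (in_conv0_cone (lam := fun i =>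
  if unlift ord0 i is Some j then mu j else c)) => [i||].
  by case: (unliftP ord0 i).
all: by rewrite big_ord_recl unlift_none; under eq_bigr => j _ do rewrite liftK.
Qed.

Lemma pos_dir_cons n (p : 'I_n.+1 -> 'rV[R]_d) (u : 'rV[R]_d) :
  0 < dotv u (p ord0) -> (forall j : 'I_n, 0 < dotv u (p (lift ord0 j))) ->
  exists u, forall i, 0 < dotv u (p i).
Proof. by move=> u0 uS; exists u => i; case: (unliftP ord0 i) => [j|] ->. Qed.

(* When [dotv u (p ord0) <= 0 < dotv u (p (lift ord0 j))], this is a positive
   multiple of the point where the segment between the two meets [u]'s
   orthogonal hyperplane. *)
Definition hyperplane_cut n (p : 'I_n.+1 -> 'rV[R]_d) u (j : 'I_n) :=
  dotv u (p (lift ord0 j)) *: p ord0 - dotv u (p ord0) *: p (lift ord0 j).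

Section Cut.
Variables (n : nat) (p : 'I_n.+1 -> 'rV[R]_d) (u : 'rV[R]_d).
Hypothesis u_tail : forall j : 'I_n, 0 < dotv u (p (lift ord0 j)).
Hypothesis u_head : dotv u (p ord0) <= 0.

Lemma in_conv0_cut : in_conv (hyperplane_cut p u) 0 -> in_conv p 0.
Proof.
move=> [mu [mu_ge0 [mu_sum1 mu_comb]]].
set c := \sum_j mu j * dotv u (p (lift ord0 j)).
have c_gt0 : 0 < c.
  have mu_sum_neq0 : \sum_j mu j <> 0 by rewrite mu_sum1; apply/eqP/oner_neq0.
  have [j /andP[_ mu_gt0]] := psumr_neq0P (fun j _ => mu_ge0 j) mu_sum_neq0.
  rewrite /c (bigD1 j) //= ltr_pwDl ?mulr_gt0 //.
  by apply: sumr_ge0 => i _; rewrite mulr_ge0 // ltW.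
apply: (in_conv0_cons (c := c) (mu := fun j => - dotv u (p ord0) * mu j)).
- exact: ltW.
- by move=> j; rewrite mulr_ge0 // oppr_ge0.
- by rewrite -mulr_sumr mu_sum1 mulr1 ltr_wpDr // oppr_ge0.
rewrite -[RHS]mu_comb /hyperplane_cut /c scaler_suml -big_split /=.
by apply: eq_bigr => j _; rewrite scalerBr !scalerA mulNr scaleNr [_ * mu j]mulrC.
Qed.

Lemma cut_dir_gordan v : (forall j, 0 < dotv v (hyperplane_cut p u j)) ->
  in_conv p 0 \/ exists z, forall i, 0 < dotv z (p i).
Proof.
move=> v_cut; set w := p ord0.
set z := dotv v w *: u - dotv u w *: v.
have zw : dotv z w = 0 by rewrite dotvBl !dotvZl (dotvC v w); ring.
have z_tail j : dotv z (p (lift ord0 j)) = dotv v (hyperplane_cut p u j).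
  by rewrite /hyperplane_cut dotvBr !dotvZr dotvBl !dotvZl; ring.
have [w0|w_neq0] := eqVneq w 0.
  left; apply: (in_conv0_cons (c := 1) (mu := fun=> 0)) => //.
    by rewrite big1 // addr0.
  by rewrite -/w w0 scaler0 add0r big1 // => j _; rewrite scale0r.
have ww_gt0 : 0 < dotv w w by rewrite lt_def dotvv_eq0 w_neq0 dotvv_ge0.
have z_tail_gt0 j : 0 < dotv z (p (lift ord0 j)) by rewrite z_tail.
have [t t_gt0 small_t] :=
  exists_pos_mul_lt (fun j => - dotv w (p (lift ord0 j))) z_tail_gt0.
right; apply: (pos_dir_cons (u := z + t *: w)).
  by rewrite dotvDl dotvZl zw add0r mulr_gt0.
by move=> j; rewrite dotvDl dotvZl; have := small_t j; lra.
Qed.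

End Cut.

Lemma gordan n (p : 'I_n -> 'rV[R]_d) :
  in_conv p 0 \/ exists u, forall i, 0 < dotv u (p i).
Proof.
elim: n p => [|n IH] p; first by right; exists 0; case.
have [[mu [mu_ge0 [mu_sum1 mu_comb]]]|[u u_tail]] := IH (fun j => p (lift ord0 j)).
  left; apply: (in_conv0_cons (c := 0) (mu := mu)) => //.
    by rewrite add0r mu_sum1.
  by rewrite scale0r add0r.
have [u_head|u_head] := ltrP 0 (dotv u (p ord0)).
  by right; exact: pos_dir_cons u_head u_tail.
have [|[v v_cut]] := IH (hyperplane_cut p u).
  by move/(in_conv0_cut u_tail u_head); left.
exact: cut_dir_gordan v_cut.
Qed.

End Gordan.

Section Angles.
Context {R : realType} {d : nat}.

Lemma ltr_acos : {in `[-1, 1] &, {mono @acos R : a b /~ b < a}}.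
Proof.
move=> a b a_itv b_itv.
have acos_itv c : c \in `[-1, 1] -> acos c \in `[0, pi].
  by rewrite !in_itv /= => c_itv; rewrite acos_ge0 ?acos_lepi.
by rewrite -ltr_cos ?acos_itv ?acosK.
Qed.

Lemma angle_sphere (u v : 'rV[R]_d) : on_sphere u -> on_sphere v ->
  angle u v = acos (dotv u v).
Proof. by rewrite /angle => -> ->; rewrite mulr1 divr1. Qed.

Variables (n : nat) (x : 'I_n -> 'rV[R]_d).
Hypothesis x_sphere : forall i, on_sphere (x i).

Lemma max_angle_itv v : on_sphere v -> max_angle x v \in `[0, pi].
Proof.
move=> v_sphere; rewrite in_itv /= bigmax_ge_id /=.
apply/bigmax_leP; split=> [|i _]; first exact: pi_ge0.
have := dotv_sphere_itv v_sphere (x_sphere i).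
by rewrite angle_sphere // in_itv /=; exact: acos_lepi.
Qed.

Lemma cos_max_angle_le v i : on_sphere v -> cos (max_angle x v) <= dotv v (x i).
Proof.
move=> v_sphere; have vx_itv := dotv_sphere_itv v_sphere (x_sphere i).
rewrite -[dotv v _]acosK // leNgt ltr_cos ?max_angle_itv // -?leNgt.
  by rewrite -angle_sphere //; exact: le_bigmax.
by move: vx_itv; rewrite !in_itv /= => vx_itv; rewrite acos_ge0 ?acos_lepi.
Qed.

Lemma max_angle_lt (M : R) v : (0 < n)%N -> M \in `[0, pi] -> on_sphere v ->
  (forall i, cos M < dotv v (x i)) -> max_angle x v < M.
Proof.
move=> n_gt0 M_itv v_sphere cosM_lt.
have vx_itv i : dotv v (x i) \in `[-1, 1] := dotv_sphere_itv v_sphere (x_sphere i).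
have angle_lt i : angle v (x i) < M.
  by rewrite angle_sphere // -[M in _ < M]cosK // ltr_acos ?cosM_lt //
    in_itv /= cos_geN1 cos_le1.
apply: bigmax_lt => [|i _]; last exact: angle_lt.
apply: le_lt_trans (angle_lt (Ordinal n_gt0)); rewrite angle_sphere //.
by apply: acos_ge0; have := vx_itv (Ordinal n_gt0); rewrite in_itv.
Qed.

End Angles.

Lemma tilt_toward (R : realType) d n (x : 'I_n -> 'rV[R]_d) (y u : 'rV[R]_d) (c : R) :
  on_sphere y -> dotv u y = 0 ->
  (forall i, c <= dotv y (x i)) -> (forall i, 0 < dotv u (x i)) ->
  exists2 v, on_sphere v & forall i, c < dotv v (x i).
Proof.
move=> /on_sphereE yy uy c_le u_pos.
have [t t_gt0 small_t] := exists_pos_mul_lt (fun=> c * dotv u u) u_pos.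
set z := y + t *: u; set s := normv z.
have zz : dotv z z = 1 + t ^+ 2 * dotv u u.
  rewrite /z !dotvDl !dotvDr !dotvZl !dotvZr yy uy (dotvC y u) uy; ring.
have s2 : s ^+ 2 = 1 + t ^+ 2 * dotv u u by rewrite sqr_normv.
have s_ge1 : 1 <= s.
  have := sqrtr_ge0 (dotv z z); have := dotvv_ge0 u; rewrite -/(normv z) -/s; nra.
have zz_gt0 : 0 < dotv z z.
  by rewrite zz; have := mulr_ge0 (sqr_ge0 t) (dotvv_ge0 u); lra.
exists (s^-1 *: z); first by apply: on_sphere_normalize; rewrite -dotvv_eq0 gt_eqF.
move=> i; have s_gt0 : 0 < s by lra.
rewrite dotvZl ltr_pdivlMl // /z dotvDl dotvZl.
have := c_le i; have := u_pos i; have := small_t i; have := dotvv_ge0 u.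
have [c_le0|c_gt0] := lerP c 0; first by nra.
(* c s <= c s^2 = c + t (t c <u, u>) < c + t <u, x_i> <= <y + t u, x_i> *)
have : c * s <= c * s ^+ 2 by rewrite ler_pM2l // expr2 ler_peMl // ltW.
rewrite s2; nra.
Qed.

Theorem lemma3p9 (R : realType) (d n : nat) (x : 'I_n -> 'rV[R]_d)
  (hn : (0 < n)%N)
  (hx : forall i, on_sphere (x i))
  (hw : exists w : 'rV[R]_d, forall i, 0 < dotv w (x i))
  (y : 'rV[R]_d) (hy : on_sphere y)
  (hmin : forall v : 'rV[R]_d, on_sphere v -> max_angle x y <= max_angle x v) :
  in_conv (fun i => proj_perp y (x i)) 0.
Proof.
have [//|[u u_pos]] := gordan (fun i => proj_perp y (x i)).
have [v v_sphere v_gt] : exists2 v, on_sphere v &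
    forall i, cos (max_angle x y) < dotv v (x i).
  apply: (tilt_toward hy (dotv_proj_perp y u) (fun i => cos_max_angle_le hx i hy)) => i.
  by rewrite -dotv_proj_perpC.
have := hmin v v_sphere; rewrite leNgt.
by rewrite (max_angle_lt hx hn (max_angle_itv hx hy) v_sphere v_gt).
Qed.
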